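(* Let $\mathcal{H}$ be a complex Hilbert space, let $A\in\mathcal{B}(\mathcal{H})$ be a nonzero positive operator, and let $\mathbb{A}=\begin{pmatrix}A&O\\O&A\end{pmatrix}$ on $\mathcal{H}\oplus\mathcal{H}$. Let $T\in\mathcal{B}_A(\mathcal{H})$ and put $\Re_A(T)=\frac{T+T^{\sharp_A}}{2}$, $\Im_A(T)=\frac{T-T^{\sharp_A}}{2i}$. Then $$\omega_A(T)\leq 2\min\left\{\omega_{\mathbb{A}}\left[\begin{pmatrix}\Re_A(T)&O\\\Im_A(T)&O\end{pmatrix}\right],\ \omega_{\mathbb{A}}\left[\begin{pmatrix}O&-i\Im_A(T)\\\Re_A(T)&O\end{pmatrix}\right]\right\}.$$
   Context: For a positive operator $A$ on $\mathcal{H}$, $\langle x,y\rangle_A:=\langle Ax,y\rangle$ and $\|x\|_A:=\sqrt{\langle x,x\rangle_A}$. $\mathcal{B}_A(\mathcal{H})$ is the set of $T\in\mathcal{B}(\mathcal{H})$ with $\mathcal{R}(T^*A)\subseteq\mathcal{R}(A)$; for such $T$, $T^{\sharp_A}$ is the unique solution $X$ of $AX=T^*A$ with $\mathcal{R}(X)\subseteq\overline{\mathcal{R}(A)}$. $\omega_A(T):=\sup\{|\langle Tx,x\rangle_A|:x\in\mathcal{H},\|x\|_A=1\}$. $\omega_{\mathbb{A}}$ is defined analogously on $\mathcal{H}\oplus\mathcal{H}$ with $\langle (x_1,x_2),(y_1,y_2)\rangle_{\mathbb{A}}=\langle x_1,y_1\rangle_A+\langle x_2,y_2\rangle_A$.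 *)

From HB Require Import structures.
From mathcomp Require Import all_boot all_order all_algebra.
From mathcomp Require Import complex.
From mathcomp Require Import all_classical all_reals.
From mathcomp Require Import ereal.

Set Implicit Arguments. Unset Strict Implicit. Unset Printing Implicit Defensive.
Import Order.TTheory GRing.Theory Num.Theory.
Local Open Scope ring_scope.

(* Complex scalars: C := R[i] for a real field R (realType);
   R[i] is a numClosedFieldType (order: z <= w iff w - z is real nonneg). *)

Section Hilbert.
Variables (R : realType) (H : lmodType R[i]).
Variable ip : H -> H -> R[i].

Definition ipnorm (x : H) : R[i] := sqrtC (ip x x).

Definition is_inner_product : Prop :=
  [/\ forall (a : R[i]) (x y z : H), ip (a *: x + y) z = a * ip x z + ip y z,
      forall x y : H, ip y x = (ip x y)^*,
      forall x : H, 0 <= ip x x &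
      forall x : H, ip x x = 0 -> x = 0].

Definition ip_complete : Prop :=
  forall u : nat -> H,
    (forall e : R[i], 0 < e -> exists N : nat, forall m n : nat,
        (N <= m)%N -> (N <= n)%N -> ipnorm (u m - u n) < e) ->
    exists l : H, forall e : R[i], 0 < e -> exists N : nat, forall n : nat,
        (N <= n)%N -> ipnorm (u n - l) < e.

Definition is_hilbert : Prop := is_inner_product /\ ip_complete.

Definition is_linear_op (f : H -> H) : Prop :=
  forall (a : R[i]) (x y : H), f (a *: x + y) = a *: f x + f y.

Definition bounded_op (f : H -> H) : Prop :=
  is_linear_op f /\ exists M : R[i], forall x : H, ipnorm (f x) <= M * ipnorm x.

Definition positive_op (A : H -> H) : Prop :=
  bounded_op A /\ forall x : H, 0 <= ip (A x) x.

Definition is_adjoint (T Tstar : H -> H) : Prop :=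
  forall x y : H, ip (T x) y = ip x (Tstar y).

Definition range_sub (F A : H -> H) : Prop :=
  forall x : H, exists y : H, F x = A y.

Definition range_sub_closure (F A : H -> H) : Prop :=
  forall x : H, forall e : R[i], 0 < e -> exists y : H, ipnorm (F x - A y) < e.

Definition in_BA (A T Tstar : H -> H) : Prop :=
  bounded_op T /\ range_sub (Tstar \o A) A.

(* X is T^{#_A}: the (unique) solution of A X = T^* A with R(X) ⊆ cl R(A) *)
Definition is_Asharp (A Tstar X : H -> H) : Prop :=
  bounded_op X /\ (forall x : H, A (X x) = Tstar (A x)) /\ range_sub_closure X A.

Definition ipA (A : H -> H) (x y : H) : R[i] := ip (A x) y.
Definition normA (A : H -> H) (x : H) : R[i] := sqrtC (ipA A x x).

Definition cmod (z : R[i]) : R := complex.Re `|z|.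

Definition omegaA (A T : H -> H) : \bar R :=
  ereal_sup [set (cmod (ipA A (T x) x))%:E | x in [set x : H | normA A x = 1]].

(* omega_{\mathbb A} of the operator matrix [[T11, T12], [T21, T22]] on H ⊕ H,
   where \mathbb A = diag(A, A) and
   <(x1,x2),(y1,y2)>_{\mathbb A} = <x1,y1>_A + <x2,y2>_A. *)
Definition omegaA2 (A T11 T12 T21 T22 : H -> H) : \bar R :=
  ereal_sup [set (cmod (ipA A (T11 p.1 + T12 p.2) p.1
                        + ipA A (T21 p.1 + T22 p.2) p.2))%:E
            | p in [set p : H * H |
                    sqrtC (ipA A p.1 p.1 + ipA A p.2 p.2) = 1]].

End Hilbert.

Definition ReA (R : realType) (H : lmodType R[i]) (T X : H -> H) : H -> H :=
  fun x => (2%:R)^-1 *: (T x + X x).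
Definition ImA (R : realType) (H : lmodType R[i]) (T X : H -> H) : H -> H :=
  fun x => (2%:R * 'i)^-1 *: (T x - X x).
Definition zero_op (R : realType) (H : lmodType R[i]) : H -> H := fun _ => 0.

From HB Require Import structures.
From mathcomp Require Import all_boot all_order all_algebra.
From mathcomp Require Import complex.
From mathcomp Require Import all_classical all_reals.
From mathcomp Require Import ereal.
From mathcomp Require Import ring.
Import Order.TTheory GRing.Theory Num.Theory.
Local Open Scope ring_scope.

(* Write T = Re_A(T) + i Im_A(T), so that for an A-unit vector x,
   <Tx, x>_A = r + i s with r = <Re_A(T)x, x>_A and s = <Im_A(T)x, x>_A.
   The pair p = (x/sqrt 2, -i x/sqrt 2) is a unit vector of H ⊕ H for the
   semi-inner product of diag(A, A), and the quadratic forms of the two operator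
   matrices evaluate at p to (r + i s)/2 and i(r + i s)/2 respectively.  Hence
   |<Tx, x>_A| is at most twice each of the two numerical radii. *)

Section LinearOp.
Variables (R : realType) (H : lmodType R[i]) (f : H -> H).
Hypothesis lf : is_linear_op f.

Lemma linear_op0 : f 0 = 0.
Proof.
have := lf 1 0 0; rewrite !scale1r addr0 => f00.
by apply: (@addrI _ (f 0)); rewrite addr0 -f00.
Qed.

Lemma linear_opZ c x : f (c *: x) = c *: f x.
Proof. by have := lf c x 0; rewrite !addr0 linear_op0 addr0. Qed.

Lemma linear_opD x y : f (x + y) = f x + f y.
Proof. by have := lf 1 x y; rewrite !scale1r. Qed.

End LinearOp.

Arguments linear_op0 {R H f}.
Arguments linear_opZ {R H f}.
Arguments linear_opD {R H f}.

Section InnerProduct.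
Variables (R : realType) (H : lmodType R[i]) (ip : H -> H -> R[i]).
Hypothesis hip : is_inner_product ip.

Lemma ip0l z : ip 0 z = 0.
Proof.
have [ipD _ _ _] := hip; have := ipD 1 0 0 z; rewrite scale1r addr0 mul1r => ip00.
by apply: (@addrI _ (ip 0 z)); rewrite addr0 -ip00.
Qed.

Lemma ipZl c x z : ip (c *: x) z = c * ip x z.
Proof. by have [ipD _ _ _] := hip; have := ipD c x 0 z; rewrite addr0 ip0l addr0. Qed.

Lemma ipDl x y z : ip (x + y) z = ip x z + ip y z.
Proof. by have [ipD _ _ _] := hip; have := ipD 1 x y z; rewrite scale1r mul1r. Qed.

Lemma ipZr c x z : ip x (c *: z) = c^* * ip x z.
Proof. by have [_ ipC _ _] := hip; rewrite ipC ipZl rmorphM /= -ipC. Qed.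

Variable A : H -> H.
Hypothesis lA : is_linear_op A.

Lemma ipA_Dl x y z : ipA ip A (x + y) z = ipA ip A x z + ipA ip A y z.
Proof. by rewrite /ipA linear_opD // ipDl. Qed.

Lemma ipA_Zl c x z : ipA ip A (c *: x) z = c * ipA ip A x z.
Proof. by rewrite /ipA linear_opZ // ipZl. Qed.

Lemma ipA_Zr c x z : ipA ip A x (c *: z) = c^* * ipA ip A x z.
Proof. exact: ipZr. Qed.

End InnerProduct.

Arguments ipA_Dl {R H ip} hip {A}.
Arguments ipA_Zl {R H ip} hip {A}.
Arguments ipA_Zr {R H ip} hip A.

Section CartesianDecomposition.
Variables (R : realType) (H : lmodType R[i]) (T X : H -> H).

Lemma ReA_add_iImA x : ReA T X x + 'i *: ImA T X x = T x.
Proof.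
rewrite /ReA /ImA scalerA.
have -> : 'i * (2%:R * 'i)^-1 = (2%:R : R[i])^-1 by field; rewrite neq0Ci.
rewrite -scalerDr addrACA subrr addr0 -mulr2n -[T x *+ 2]scaler_nat scalerA.
by rewrite mulVf ?scale1r // pnatr_eq0.
Qed.

Hypotheses (lT : is_linear_op T) (lX : is_linear_op X).

Lemma ReAZ c x : ReA T X (c *: x) = c *: ReA T X x.
Proof. by rewrite /ReA (linear_opZ lT) (linear_opZ lX) -scalerDr !scalerA mulrC. Qed.

Lemma ImAZ c x : ImA T X (c *: x) = c *: ImA T X x.
Proof. by rewrite /ImA (linear_opZ lT) (linear_opZ lX) -scalerBr !scalerA mulrC. Qed.

End CartesianDecomposition.

Arguments ReA_add_iImA {R H}.
Arguments ReAZ {R H T X}.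
Arguments ImAZ {R H T X}.

Lemma cmod_le_twice_ereal_sup (R : realType) (S : set (\bar R)) (v w : R[i]) :
  `|v| = `|w| *+ 2 -> S (cmod w)%:E -> ((cmod v)%:E <= 2%:E * ereal_sup S)%E.
Proof.
move=> vw Sw; have -> : cmod v = 2 * cmod w by rewrite /cmod vw raddfMn mulr_natl.
rewrite EFinM; apply: lee_wpmul2l; [by rewrite lee_fin ler0n | exact: ereal_sup_ubound].
Qed.

Section NumericalRadiusBounds.
Variables (R : realType) (H : lmodType R[i]) (ip : H -> H -> R[i]).
Variables (A T X : H -> H).
Hypotheses (hip : is_inner_product ip) (lA : is_linear_op A).
Hypotheses (lT : is_linear_op T) (lX : is_linear_op X).

Let ipA_Dl := ipA_Dl hip lA.
Let ipA_Zl := ipA_Zl hip lA.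
Let ipA_Zr := ipA_Zr hip A.
Let ReAZ := ReAZ lT lX.
Let ImAZ := ImAZ lT lX.

Lemma ipA_T_ReA_ImA x :
  ipA ip A (T x) x = ipA ip A (ReA T X x) x + 'i * ipA ip A (ImA T X x) x.
Proof. by rewrite -{1}(ReA_add_iImA T X x) ipA_Dl (ipA_Zl 'i). Qed.

Let c : R[i] := sqrtC 2%:R^-1.

Let cc : c * c = 2%:R^-1.
Proof. by rewrite -expr2 sqrtCK. Qed.

Let c_conj : c^* = c.
Proof. by rewrite geC0_conj // sqrtC_ge0 invr_ge0 ler0n. Qed.

Lemma normA2_pair_unit x : ipA ip A x x = 1 ->
  sqrtC (ipA ip A (c *: x) (c *: x) + ipA ip A ((- 'i * c) *: x) ((- 'i * c) *: x)) = 1.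
Proof.
move=> xx; rewrite !ipA_Zl !ipA_Zr xx rmorphM rmorphN /= conjCi c_conj.
have -> : c * (c * 1) + - 'i * c * (- - 'i * c * 1) = (1 - 'i ^+ 2) * (c * c) by ring.
by rewrite sqrCi opprK cc -[1 + 1]/(2%:R) mulfV ?pnatr_eq0 // sqrtC1.
Qed.

Lemma cmod_ipA_le_omegaA2_ReA_ImA x : ipA ip A x x = 1 ->
  ((cmod (ipA ip A (T x) x))%:E <=
   2%:E * omegaA2 ip A (ReA T X) (@zero_op R H) (ImA T X) (@zero_op R H))%E.
Proof.
move=> xx; apply: (@cmod_le_twice_ereal_sup _ _ _ (2%:R^-1 * ipA ip A (T x) x)).
  by rewrite normrM normfV normr_nat; field.
exists (c *: x, (- 'i * c) *: x); first exact: normA2_pair_unit.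
rewrite /= /zero_op !addr0 ReAZ ImAZ !(ipA_Zl c) !ipA_Zr ipA_T_ReA_ImA.
by rewrite rmorphM rmorphN /= conjCi c_conj -cc; congr (cmod _)%:E; ring.
Qed.

Lemma cmod_ipA_le_omegaA2_antidiag x : ipA ip A x x = 1 ->
  ((cmod (ipA ip A (T x) x))%:E <=
   2%:E * omegaA2 ip A (@zero_op R H) (fun y => - 'i *: ImA T X y)
                       (ReA T X) (@zero_op R H))%E.
Proof.
move=> xx; apply: (@cmod_le_twice_ereal_sup _ _ _ (2%:R^-1 * 'i * ipA ip A (T x) x)).
  by rewrite !normrM normfV normr_nat normCi; field.
exists (c *: x, (- 'i * c) *: x); first exact: normA2_pair_unit.
rewrite /= /zero_op !addr0 add0r ReAZ ImAZ scalerA (ipA_Zl (_ * _)) (ipA_Zl c).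
rewrite !ipA_Zr ipA_T_ReA_ImA.
by rewrite rmorphM rmorphN /= conjCi c_conj -cc; congr (cmod _)%:E; ring.
Qed.

End NumericalRadiusBounds.

Arguments cmod_ipA_le_omegaA2_ReA_ImA {R H ip A T X} hip lA lT lX {x}.
Arguments cmod_ipA_le_omegaA2_antidiag {R H ip A T X} hip lA lT lX {x}.

Theorem theorem2p20 (R : realType) (H : lmodType R[i]) (ip : H -> H -> R[i])
  (hH : is_hilbert ip)
  (A : H -> H) (hA : positive_op ip A) (hA0 : exists x : H, A x != 0)
  (T Tstar : H -> H) (hTstar : is_adjoint ip T Tstar) (hT : in_BA ip A T Tstar)
  (X : H -> H) (hX : is_Asharp ip A Tstar X) :
  (omegaA ip A T <=
   2%:E * Order.min
     (omegaA2 ip A (ReA T X) (@zero_op R H) (ImA T X) (@zero_op R H))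
     (omegaA2 ip A (@zero_op R H) (fun x => - 'i *: ImA T X x) (ReA T X) (@zero_op R H)))%E.
Proof.
have [[hip _] [[lA _] _]] := (hH, hA).
have [[[lT _] _] [[lX _] _]] := (hT, hX).
apply: ge_ereal_sup => _ [x /= unit_x <-].
have xx : ipA ip A x x = 1 by rewrite -[LHS]sqrtCK -/(normA ip A x) unit_x expr1n.
have le1 := cmod_ipA_le_omegaA2_ReA_ImA hip lA lT lX xx.
have le2 := cmod_ipA_le_omegaA2_antidiag hip lA lT lX xx.
by rewrite minEle; case: ifP.
Qed.
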